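(* Let $A$ be a Hausdorff topological space. Then $+\infty\in P_h(A)$ if and only if $A$ is infinite.
   Context: For a topological space $A$, $Homeo(A)$ denotes the group of all homeomorphisms $A\to A$ under composition. For a subgroup $G$ of $Homeo(A)$ (acting by $gx=g(x)$), a nonempty subset $Y\subseteq A$ is invariant if $g(y)\in Y$ for all $g\in G$, $y\in Y$. The height of $(G,A)$ is $h(G,A)=\sup\{n\geq 0:$ there exist distinct closed invariant subsets $Y_0\subset Y_1\subset\cdots\subset Y_n=A\}$ (possibly $+\infty$). Finally $P_h(A)=\{h(G,A): G \text{ is a subgroup of } Homeo(A)\}$. *)

From HB Require Import structures.
From mathcomp Require Import all_boot all_order all_algebra.
From mathcomp Require Import all_classical all_reals topology ereal.
From mathcomp Require Import Rstruct.
Set Implicit Arguments. Unset Strict Implicit. Unset Printing Implicit Defensive.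
Import Order.TTheory GRing.Theory Num.Theory.
Local Open Scope classical_set_scope.
Local Open Scope ring_scope.

Definition homeo (A : topologicalType) (f : A -> A) : Prop :=
  continuous f /\ exists g : A -> A, continuous g /\ cancel f g /\ cancel g f.

Definition homeo_subgroup (A : topologicalType) (G : set (A -> A)) : Prop :=
  [/\ (forall f, G f -> homeo f),
      G id,
      (forall f g, G f -> G g -> G (f \o g)) &
      (forall f, G f -> exists2 g, G g & cancel f g /\ cancel g f)].

Definition invariant (A : topologicalType) (G : set (A -> A)) (Y : set A) : Prop :=
  Y !=set0 /\ forall g y, G g -> Y y -> Y (g y).

Definition has_chain (A : topologicalType) (G : set (A -> A)) (n : nat) : Prop :=
  exists Y : nat -> set A,
    [/\ (forall i, (i <= n)%N -> closed (Y i) /\ invariant G (Y i)),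
        (forall i, (i < n)%N -> Y i `<` Y i.+1) &
        Y n = setT].

Definition height (A : topologicalType) (G : set (A -> A)) : \bar Rdefinitions.R :=
  ereal_sup [set ((n%:R : Rdefinitions.R)%:E) | n in [set n | has_chain G n]].

Definition P_h (A : topologicalType) : set (\bar Rdefinitions.R) :=
  [set @height A G | G in [set G | @homeo_subgroup A G]].

From mathcomp Require Import all_boot all_order all_algebra.
From mathcomp Require Import all_classical all_reals topology ereal.
From mathcomp Require Import Rstruct.
Set Implicit Arguments. Unset Strict Implicit. Unset Printing Implicit Defensive.
Import Order.TTheory GRing.Theory Num.Theory.
Local Open Scope classical_set_scope.
Local Open Scope card_scope.
Local Open Scope ring_scope.

(* A strictly increasing chain Y_0 < ... < Y_n of subsets of A picks up a
   new point at each step, so h(G, A) <= #|A| when A is finite.  Conversely,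
   if A is infinite, take distinct points x_0, x_1, ...; in a T1 (e.g.
   Hausdorff) space the finite sets {x_0, ..., x_i} are closed, and every
   nonempty set is invariant under the trivial group, so
   {x_0} < {x_0, x_1} < ... < {x_0, ..., x_(n-1)} < A is a chain of length n
   for every n and the trivial group has height +oo. *)

Section strict_chain.
Variables (T : Type) (Y : nat -> set T) (n : nat).
Hypothesis Ylt : forall i, (i < n)%N -> Y i `<` Y i.+1.

Lemma strict_chain_le i j : (i <= j <= n)%N -> Y i `<=` Y j.
Proof.
case/andP=> le_ij le_jn.
apply: (@homo_leq_in _ [pred k | k <= n]%N Y (@subset T)) => //.
- by move=> ?.
- by move=> ? ? ? xy yz; apply: subset_trans xy yz.
- by move=> ? ? /= ? ? k /andP[_ /ltnW /leq_trans]; apply.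
- by move=> k _; rewrite inE => /Ylt/properW.
- by rewrite inE /= (leq_trans le_ij le_jn).
Qed.

Lemma card_II_le_strict_chain : `I_n #<= Y n.
Proof.
have [->|n_gt0] := posnP n; first by rewrite II0; exact: card_ge0.
have proper_new i : (i < n)%N -> exists2 y, Y i.+1 y & ~ Y i y.
  move=> /Ylt [_]; rewrite -setD_eq0 => /eqP/set0P [y [Yi1y nYiy]].
  by exists y.
have [t _ _] := proper_new 0%N n_gt0.
have new_point i : exists y, (i < n)%N -> Y i.+1 y /\ ~ Y i y.
  have [lt_in|_] := ltnP i n; last by exists t.
  by have [y Yi1y nYiy] := proper_new i lt_in; exists y.
have [y yP] := choice new_point.
have y_sep i j : (i < j < n)%N -> y i <> y j.
  case/andP=> lt_ij lt_jn eq_yij; have [_] := yP j lt_jn; apply.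
  rewrite -eq_yij; apply: (@strict_chain_le i.+1); last first.
    exact: (yP i (ltn_trans lt_ij lt_jn)).1.
  by rewrite lt_ij ltnW.
have y_inj : {in `I_n &, injective y}.
  move=> i j; rewrite !inE /= => lt_in lt_jn eq_yij.
  by case: (ltngtP i j) => // [lt_ij|lt_ji];
    [case: (y_sep i j) | case: (y_sep j i)]; rewrite ?lt_ij ?lt_ji.
rewrite -(card_le_eql (inj_card_eq y_inj)); apply: subset_card_le.
move=> _ [i /= lt_in <-]; apply: (@strict_chain_le i.+1 n).
  by rewrite lt_in leqnn.
exact: (yP i lt_in).1.
Qed.

End strict_chain.

Lemma has_chain_card_le (A : topologicalType) (G : set (A -> A)) n :
  has_chain G n -> `I_n #<= [set: A].
Proof. by case=> Y [_ Ylt <-]; exact: card_II_le_strict_chain. Qed.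

Lemma height_le_card (A : topologicalType) (G : set (A -> A)) k :
  [set: A] #= `I_k -> (height G <= (k%:R : Rdefinitions.R)%:E)%E.
Proof.
move=> Ak; apply: ge_ereal_sup => _ [n /has_chain_card_le chain_n <-].
by rewrite lee_fin ler_nat -card_le_II -(card_le_eqr Ak).
Qed.

Lemma homeo_subgroup_id (A : topologicalType) : homeo_subgroup [set @id A].
Proof.
have id_continuous : continuous (@id A) by move=> ?.
by split=> [f ->|//|f g -> ->//|f ->]; [split=> //; exists id | exists id].
Qed.

Lemma invariant_id (A : topologicalType) (Y : set A) :
  Y !=set0 -> invariant [set @id A] Y.
Proof. by move=> Y0; split=> // g y ->. Qed.

Lemma has_chain_id (A : topologicalType) (x : nat -> A) :
  accessible_space A -> injective x -> forall n, has_chain [set @id A] n.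
Proof.
move=> T1A x_inj n.
pose Y i := if (i < n)%N then x @` `I_i.+1 else [set: A].
have Y0 i : Y i !=set0.
  by rewrite /Y; case: ifP => _; exists (x 0%N) => //; exists 0%N.
have Ycl i : closed (Y i).
  rewrite /Y; case: ifP => _; last exact: closedT.
  apply: (proj1 (@accessible_finite_set_closed A) T1A).
  exact/finite_image/finite_II.
have xnew i : ~ (x @` `I_i.+1) (x i.+1) by case=> j + /x_inj ji; rewrite ji /= ltnn.
exists Y; split=> [i _|i lt_in|]; first by split; [exact: Ycl | exact: invariant_id (Y0 i)].
- rewrite /Y lt_in; case: ifP => lt_i1n; split=> //.
  + by move=> _ [j /= lt_ji <-]; exists j => //; exact: leqW lt_ji.
  + move=> /(_ (x i.+1)) sub; apply: (xnew i); apply: sub.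
    by exists i.+1 => //; exact: ltnSn.
  + by move=> /(_ (x i.+1) I); exact: xnew.
- by rewrite /Y ltnn.
Qed.

Lemma infinite_setT_nat_inj (T : Type) :
  infinite_set [set: T] -> exists x : nat -> T, injective x.
Proof.
elim/Ppointed: T => T; first by rewrite emptyE; case; exact: finite_set0.
by move=> /infiniteP/pcard_injP [x /in2TT]; exists x.
Qed.

Lemma ereal_sup_natr (R : realType) :
  ereal_sup [set (n%:R : R)%:E | n in [set: nat]] = +oo%E.
Proof.
rewrite -(image_comp (fun n : nat => n%:R : R) EFin) hasNub_ereal_sup //.
- apply/has_ubPn => r; exists (Num.truncn r).+1%:R; last exact: truncnS_gt.
  by exists (Num.truncn r).+1.
- by exists 0; exists 0%N.
Qed.

Theorem lemma2p2 (A : topologicalType) (hA : hausdorff_space A) :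
  P_h A +oo%E <-> infinite_set [set: A].
Proof.
split.
- case=> G _ hG [k Ak].
  by have := height_le_card G Ak; rewrite hG.
- move=> /infinite_setT_nat_inj [x x_inj].
  exists [set id]; first exact: homeo_subgroup_id.
  rewrite /height (_ : [set n | has_chain _ n] = setT) ?ereal_sup_natr //.
  apply/seteqP; split=> // n _.
  exact: has_chain_id (hausdorff_accessible hA) x_inj n.
Qed.
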